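(* Let $K_1,K_2\subset\mathbb{R}^n$ be closed with $T_{K_1}(x)=T^a_{K_1}(x)$ for all $x\in\partial K_1\cap\partial K_2$. Let $x_o\in\partial K_1\cap\partial K_2$ and assume there exist a neighborhood $\mathcal{N}(x_o)$ of $x_o$, $c>0$ and $\alpha\in[0,1)$ such that for all $(x_1,x_2)\in((\partial K_1\setminus K_2)\cap\mathcal{N}(x_o))\times((\partial K_2\setminus K_1)\cap\mathcal{N}(x_o))$ there exist $(v_1,v_2)\in T_{K_1}(x_1)\times T_{K_2}(x_2)$ with $|(v_1,v_2)|\le c|x_1-x_2|$ and $$x_2-x_1\in(v_1-v_2)+\alpha|x_1-x_2|\mathbb{B}.$$ Then $$T_{K_1}(x_o)\cap T_{K_2}(x_o)=T_{K_1\cap K_2}(x_o)\quad\text{and}\quad T^a_{K_1}(x_o)\cap T^a_{K_2}(x_o)=T^a_{K_1\cap K_2}(x_o).$$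
   Context: $\mathbb{B}$ is the closed unit ball of $\mathbb{R}^n$. Contingent cone of a set $S$ at $x\in\operatorname{cl}(S)$: $T_S(x)=\{v: \exists t_i\to 0^+, \exists v_i\to v,\ x+t_iv_i\in S\}$. Adjacent cone: $T^a_S(x)=\{v: \forall t_i\to 0^+, \exists v_i\to v,\ x+t_iv_i\in S\}$. *)

From HB Require Import structures.
From mathcomp Require Import all_boot all_order all_algebra.
From mathcomp Require Import all_classical all_reals all_analysis.
Set Implicit Arguments. Unset Strict Implicit. Unset Printing Implicit Defensive.
Import Order.TTheory GRing.Theory Num.Theory.
Import numFieldNormedType.Exports.
Local Open Scope classical_set_scope.
Local Open Scope ring_scope.

Definition enorm (R : realType) (n : nat) (v : 'rV[R]_n) : R :=
  Num.sqrt (\sum_(i < n) (v ord0 i) ^+ 2).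

Definition enorm2 (R : realType) (n : nat) (v1 v2 : 'rV[R]_n) : R :=
  Num.sqrt (\sum_(i < n) (v1 ord0 i) ^+ 2 + \sum_(i < n) (v2 ord0 i) ^+ 2).

Definition bd (R : realType) (n : nat) (A : set 'rV[R]_n) : set 'rV[R]_n :=
  closure A `\` interior A.

Definition contingent_cone (R : realType) (n : nat) (S : set 'rV[R]_n)
    (x : 'rV[R]_n) : set 'rV[R]_n :=
  [set v | exists (t : nat -> R) (w : nat -> 'rV[R]_n),
     (forall i, 0 < t i) /\ t @ \oo --> 0 /\ w @ \oo --> v /\
     (forall i, S (x + t i *: w i))].

Definition adjacent_cone (R : realType) (n : nat) (S : set 'rV[R]_n)
    (x : 'rV[R]_n) : set 'rV[R]_n :=
  [set v | forall t : nat -> R, (forall i, 0 < t i) -> t @ \oo --> 0 ->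
     exists w : nat -> 'rV[R]_n, w @ \oo --> v /\
       (forall i, S (x + t i *: w i))].

From HB Require Import structures.
From mathcomp Require Import all_boot all_order all_algebra.
From mathcomp Require Import all_classical all_reals all_analysis.
From mathcomp Require Import ring lra.
Import Order.TTheory GRing.Theory Num.Theory.
Import numFieldNormedType.Exports.
Local Open Scope classical_set_scope.
Local Open Scope ring_scope.
Set Implicit Arguments. Unset Strict Implicit. Unset Printing Implicit Defensive.

(* Transversality first yields a local metric estimate near [xo]: points [p1] of [K1]
   and [p2] of [K2] close to [xo] have a point of [K1 `&` K2] within [L |p1 - p2|] of [p1].
   It comes from minimizing [|z1 - z2| + eps (|z1 - p1| + |z2 - p2|)] over [K1 x K2]: at a
   minimizing pair with [z1 != z2] each point lies on the boundary of its set and outside the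
   other one, and the first-order conditions along the tangent directions [v1], [v2] given by
   transversality force [(1 - alpha) |z1 - z2|^2 <= 2 eps c |z1 - z2|^2], impossible for small
   [eps]. With this estimate, sequences [xo + t_k w1_k] in [K1] and [xo + t_k w2_k] in [K2]
   with [w1_k, w2_k -> v] are moved into [K1 `&` K2] at a cost [o(t_k)]. For contingent
   directions the two sequences can be given the same [t_k] because [T_K1(xo)] is the
   adjacent cone. *)

Section Euclidean.
Variables (R : realType) (n : nat).
Implicit Types (u v w : 'rV[R]_n) (t : R).

Definition dotp u v : R := \sum_(i < n) u ord0 i * v ord0 i.

Lemma dotpC u v : dotp u v = dotp v u.
Proof. by apply: eq_bigr => i _; rewrite mulrC. Qed.

Lemma dotpDl u v w : dotp (u + v) w = dotp u w + dotp v w.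
Proof. by rewrite /dotp -big_split; apply: eq_bigr => i _; rewrite !mxE mulrDl. Qed.

Lemma dotpZl t u w : dotp (t *: u) w = t * dotp u w.
Proof. by rewrite /dotp mulr_sumr; apply: eq_bigr => i _; rewrite !mxE mulrA. Qed.

Lemma dotpDr u v w : dotp u (v + w) = dotp u v + dotp u w.
Proof. by rewrite dotpC dotpDl !(dotpC u). Qed.

Lemma dotpZr t u w : dotp u (t *: w) = t * dotp u w.
Proof. by rewrite dotpC dotpZl dotpC. Qed.

Lemma dotp0l w : dotp 0 w = 0.
Proof. by rewrite -(scale0r 0) dotpZl mul0r. Qed.

Lemma dotpNl u w : dotp (- u) w = - dotp u w.
Proof. by rewrite -scaleN1r dotpZl mulN1r. Qed.

Lemma dotpBl u v w : dotp (u - v) w = dotp u w - dotp v w.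
Proof. by rewrite dotpDl dotpNl. Qed.

Lemma enorm_sqr v : enorm v ^+ 2 = dotp v v.
Proof.
rewrite /enorm sqr_sqrtr; last by apply: sumr_ge0 => i _; exact: sqr_ge0.
by apply: eq_bigr => i _; rewrite expr2.
Qed.

Lemma enorm_ge0 v : 0 <= enorm v.
Proof. exact: sqrtr_ge0. Qed.

Lemma coord_le_enorm v i : `|v ord0 i| <= enorm v.
Proof.
rewrite -sqrtr_sqr ler_wsqrtr // (bigD1 i) //= lerDl.
by apply: sumr_ge0 => j _; exact: sqr_ge0.
Qed.

Lemma enorm_eq0 v : (enorm v == 0) = (v == 0).
Proof.
apply/eqP/eqP => [v0|->]; last by rewrite /enorm big1 ?sqrtr0 // => i _; rewrite mxE expr0n.
apply/rowP => i; rewrite mxE; apply/normr0_eq0/le_anti.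
by rewrite normr_ge0 andbT -v0 coord_le_enorm.
Qed.

Lemma enorm_gt0 v : (0 < enorm v) = (v != 0).
Proof. by rewrite lt_neqAle enorm_ge0 andbT eq_sym enorm_eq0. Qed.

Lemma enorm0 : enorm (0 : 'rV[R]_n) = 0.
Proof. by apply/eqP; rewrite enorm_eq0. Qed.

Lemma enormZ t v : enorm (t *: v) = `|t| * enorm v.
Proof.
rewrite /enorm -sqrtr_sqr -sqrtrM ?sqr_ge0 // mulr_sumr.
by congr Num.sqrt; apply: eq_bigr => i _; rewrite mxE exprMn.
Qed.

Lemma enormN v : enorm (- v) = enorm v.
Proof. by rewrite -scaleN1r enormZ normrN1 mul1r. Qed.

Lemma enorm_distC u v : enorm (u - v) = enorm (v - u).
Proof. by rewrite -enormN opprB. Qed.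

Lemma enorm_sqrDZ u w t :
  enorm (u + t *: w) ^+ 2 = enorm u ^+ 2 + 2 * t * dotp u w + t ^+ 2 * enorm w ^+ 2.
Proof.
by rewrite !enorm_sqr !dotpDl !dotpDr !dotpZl !dotpZr (dotpC w u); ring.
Qed.

(* Expand [0 <= |b u - a v|^2] with [a = |u|], [b = |v|]. *)
Lemma cauchy_schwarz u v : dotp u v <= enorm u * enorm v.
Proof.
have [->|u0] := eqVneq u 0; first by rewrite dotp0l mulr_ge0 ?enorm_ge0.
have [->|v0] := eqVneq v 0; first by rewrite dotpC dotp0l mulr_ge0 ?enorm_ge0.
have a_gt0 : 0 < enorm u by rewrite enorm_gt0.
have b_gt0 : 0 < enorm v by rewrite enorm_gt0.
have expand := enorm_sqrDZ (enorm v *: u) v (- enorm u).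
rewrite enormZ dotpZl ger0_norm ?enorm_ge0 // in expand.
have : 0 <= 2 * enorm u * enorm v * (enorm u * enorm v - dotp u v).
  rewrite [X in _ <= X](_ : _ = enorm (enorm v *: u + - enorm u *: v) ^+ 2) ?sqr_ge0 //.
  by rewrite expand; ring.
by rewrite pmulr_rge0 ?subr_ge0 // !mulr_gt0.
Qed.

Lemma cauchy_schwarz_abs u v : `|dotp u v| <= enorm u * enorm v.
Proof.
rewrite ler_norml cauchy_schwarz andbT lerNl -dotpNl -(enormN u).
exact: cauchy_schwarz.
Qed.

Lemma enormD u v : enorm (u + v) <= enorm u + enorm v.
Proof.
rewrite -(ler_pXn2r (n:=2)) ?nnegrE ?addr_ge0 ?enorm_ge0 //.
have := enorm_sqrDZ u v 1; rewrite scale1r => ->; have := cauchy_schwarz u v; lra.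
Qed.

Lemma ler_enorm_dist u v : `|enorm u - enorm v| <= enorm (u - v).
Proof.
have := enormD (u - v) v; have := enormD (v - u) u.
rewrite !subrK (enorm_distC v u) ler_norml; lra.
Qed.

Lemma normr_le_enorm v : `|v| <= enorm v.
Proof.
rewrite [leLHS]/Num.Def.normr /= mx_normrE.
apply: bigmax_le => [|[i j] _]; first exact: enorm_ge0.
by rewrite (ord1 i) coord_le_enorm.
Qed.

Lemma enorm_le_normr v : enorm v <= n.+1%:R * `|v|.
Proof.
have coord_le i : `|v ord0 i| <= `|v|.
  rewrite [leRHS]/Num.Def.normr /= mx_normrE.
  exact: le_trans (le_bigmax _ _ (ord0, i)).
rewrite /enorm -[leRHS]ger0_norm ?mulr_ge0 // -sqrtr_sqr ler_wsqrtr //.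
apply: le_trans (_ : \sum_(i < n) `|v| ^+ 2 <= _).
  apply: ler_sum => i _; rewrite -real_normK ?num_real //.
  by rewrite lerXn2r ?nnegrE // coord_le.
rewrite sumr_const card_ord exprMn -[_ *+ n]mulr_natl ler_wpM2r ?sqr_ge0 //.
by rewrite -natrX ler_nat (@leq_trans n.+1) // expnS leq_pmulr.
Qed.

Lemma enorm_le_enorm2l v w : enorm v <= enorm2 v w.
Proof. by apply: ler_wsqrtr; rewrite lerDl; apply: sumr_ge0 => i _; exact: sqr_ge0. Qed.

Lemma enorm_le_enorm2r v w : enorm w <= enorm2 v w.
Proof. by apply: ler_wsqrtr; rewrite lerDr; apply: sumr_ge0 => i _; exact: sqr_ge0. Qed.

End Euclidean.

Lemma klipschitz_continuous (K : realFieldType) (V W : normedModType K) (k : K)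
    (f : V -> W) :
  k.-lipschitz f -> continuous f.
Proof.
move=> fk x; apply/cvgrPdist_lt => e e0.
have k1 : 0 < `|k| + 1 by rewrite ltr_wpDl.
have kk : k <= `|k| + 1 by rewrite (le_trans (ler_norm k)) // lerDl.
near=> y; apply: le_lt_trans (fk (x, y) (conj I I)) _.
apply: le_lt_trans (ler_wpM2r (normr_ge0 _) kk) _.
rewrite -ltr_pdivlMl //; near: y; apply: cvgr_dist_lt => //.
by rewrite mulrC divr_gt0.
Unshelve. all: by end_near. Qed.

Section EuclideanContinuity.
Variables (R : realType) (n : nat).

Lemma enorm_continuous : continuous (@enorm R n).
Proof.
apply: (@klipschitz_continuous _ _ _ n.+1%:R) => -[u v] _ /=.
exact: le_trans (ler_enorm_dist u v) (enorm_le_normr _).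
Qed.

Lemma enormB_continuous (p : 'rV[R]_n) : continuous (fun y : 'rV[R]_n => enorm (y - p)).
Proof.
apply: (@klipschitz_continuous _ _ _ n.+1%:R) => -[u v] _ /=.
apply: le_trans (ler_enorm_dist _ _) _.
by rewrite opprB addrA subrK enorm_le_normr.
Qed.

Lemma dotp_continuous (a : 'rV[R]_n) : continuous (dotp a).
Proof.
apply: (@klipschitz_continuous _ _ _ (enorm a * n.+1%:R)) => -[u v] _ /=.
rewrite !(dotpC a) -dotpBl -mulrA.
apply: le_trans (cauchy_schwarz_abs _ _) _; rewrite mulrC.
by rewrite ler_wpM2l ?enorm_ge0 ?enorm_le_normr.
Qed.

Lemma compact_closed_enorm_ball (K : set 'rV[R]_n) (p : 'rV[R]_n) (r : R) :
  closed K -> compact (K `&` [set y | enorm (y - p) <= r]).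
Proof.
move=> Kcl; apply: bounded_closed_compact.
  exists (`|p| + r); split; first by rewrite num_real.
  move=> M hM y [_ hy] /=; apply: le_trans (ltW hM).
  rewrite -[y](subrK p) addrC; apply: le_trans (ler_normD _ _) _.
  by rewrite lerD2l (le_trans (normr_le_enorm _)).
apply: closedI => //; apply: (preimage_closed _ (@closed_le _ r)).
by move=> y _; exact: enormB_continuous.
Qed.

Lemma nbhs_enorm_ball (x : 'rV[R]_n) (N : set 'rV[R]_n) :
  nbhs x N -> exists2 r : R, 0 < r & forall y, enorm (y - x) < r -> N y.
Proof.
move/nbhs_ballP => [r r0 xrN]; exists r => // y xy; apply: xrN.
rewrite mx_norm_ball /ball_ /= distrC; exact: le_lt_trans (normr_le_enorm _) xy.
Qed.

End EuclideanContinuity.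

Section Cones.
Variables (R : realType) (n : nat).
Implicit Types (A B : set 'rV[R]_n) (x v : 'rV[R]_n).

Lemma contingent_cone_sub A B x : A `<=` B -> contingent_cone A x `<=` contingent_cone B x.
Proof.
move=> AB v [t [w [t_gt0 [t0 [wv Aw]]]]].
by exists t, w; do 3 split => //; move=> i; exact/AB/Aw.
Qed.

Lemma adjacent_cone_sub A B x : A `<=` B -> adjacent_cone A x `<=` adjacent_cone B x.
Proof.
move=> AB v Av t t_gt0 t0; have [w [wv Aw]] := Av t t_gt0 t0.
by exists w; split => // i; exact/AB/Aw.
Qed.

Lemma interior_contingent_cone A x v : interior A x -> contingent_cone A x v.
Proof.
move=> Ax.
have xv : (fun k => x + (harmonic k : R) *: v) @ \oo --> x.
  rewrite -[x in _ --> x]addr0 -(scale0r v).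
  exact: cvgD (cvg_cst _) (cvgZ cvg_harmonic (cvg_cst _)).
have [N _ AN] := xv A Ax.
exists (@harmonic R), (fun k => if (N <= k)%N then v else 0).
split; first by move=> k; exact: harmonic_gt0.
split; first exact: cvg_harmonic.
split.
  have wv : {near \oo, (fun=> v) =1 (fun k => if (N <= k)%N then v else 0)}.
    by exists N => // k /= ->.
  exact: cvg_trans (near_eq_cvg wv) (cvg_cst v).
move=> k; case: ifP => [Nk|_]; first exact: AN.
by rewrite scaler0 addr0; exact: interior_subset.
Qed.

End Cones.

Section PenalizedProjection.
Variables (R : realType) (n : nat) (K : set 'rV[R]_n) (b x y : 'rV[R]_n) (eps : R).
Hypothesis eps_ge0 : 0 <= eps.
Hypothesis y_min : forall z, K z ->
  enorm (y - b) + eps * enorm (y - x) <= enorm (z - b) + eps * enorm (z - x).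

Lemma penalized_min_step t w : 0 < t -> K (y + t *: w) ->
  0 <= dotp (y - b) w + eps * enorm (y - b) * enorm w + t * enorm w ^+ 2.
Proof.
move=> t_gt0 Kz; have := y_min Kz.
rewrite [y + _ - b]addrAC [y + _ - x]addrAC.
have := enormD (y - x) (t *: w); rewrite enormZ gtr0_norm //.
have := enorm_sqrDZ (y - b) w t.
have := enorm_ge0 (y - b + t *: w); have := enorm_ge0 (y - b); have := enorm_ge0 w.
set e := enorm (y - b + t *: w); set d := enorm (y - b); set W := enorm w.
set D := dotp (y - b) w.
move=> W_ge0 d_ge0 e_ge0 e_sqr le_sum le_min.
have q_ge0 : 0 <= eps * t * W by rewrite !mulr_ge0 // ltW.
have lo : d - eps * t * W <= e.
  by have := ler_wpM2l eps_ge0 le_sum; rewrite mulrDr mulrA; lra.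
have : d ^+ 2 - 2 * d * (eps * t * W) <= e ^+ 2.
  by have [|] := lerP (eps * t * W) d; nra.
rewrite e_sqr => le_sqr.
have : 0 <= t * (2 * D + 2 * eps * d * W + t * W ^+ 2) by nra.
rewrite pmulr_rge0 // => ge0; nra.
Qed.

Lemma penalized_min_tangent v : contingent_cone K y v ->
  0 <= dotp (y - b) v + eps * enorm (y - b) * enorm v.
Proof.
move=> [t [w [t_gt0 [t0 [wv Kw]]]]].
have Wv : (fun k => enorm (w k)) @ \oo --> enorm v := cvg_comp _ _ wv (@enorm_continuous _ _ v).
have : (fun k => dotp (y - b) (w k) + eps * enorm (y - b) * enorm (w k)
                 + t k * enorm (w k) ^+ 2) @ \oo
       --> dotp (y - b) v + eps * enorm (y - b) * enorm v + 0 * (enorm v * enorm v).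
  apply: cvgD; first apply: cvgD.
  - exact: cvg_comp _ _ wv (@dotp_continuous _ _ _ v).
  - exact: cvgMl_tmp Wv.
  - by under eq_fun do rewrite expr2; exact: cvgM t0 (cvgM Wv Wv).
rewrite mul0r addr0; apply: (closed_cvg _ (@closed_ge _ 0)).
by apply: nearW => k; exact: penalized_min_step.
Qed.

Lemma penalized_min_not_interior : eps < 1 -> y != b -> ~ interior K y.
Proof.
move=> eps_lt1 yb /(interior_contingent_cone (b - y)) /penalized_min_tangent.
rewrite -[b - y]opprB dotpC dotpNl enormN -enorm_sqr.
have d_gt0 : 0 < enorm (y - b) by rewrite enorm_gt0 subr_eq0.
have : 0 < enorm (y - b) * enorm (y - b) * (1 - eps) by rewrite !mulr_gt0 ?subr_gt0.
rewrite expr2; lra.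
Qed.

End PenalizedProjection.

Section PenalizedGap.
Variables (R : realType) (n : nat) (p1 p2 : 'rV[R]_n) (eps : R).

Definition penalized_gap (z : 'rV[R]_n * 'rV[R]_n) : R :=
  enorm (z.1 - z.2) + eps * (enorm (z.1 - p1) + enorm (z.2 - p2)).

Lemma penalized_gap_continuous : continuous penalized_gap.
Proof.
move=> z; apply: cvgD; last apply: cvgMl_tmp; last apply: cvgD.
- apply: (cvg_comp (fun z : 'rV[R]_n * 'rV[R]_n => z.1 - z.2)); last exact: enorm_continuous.
  by apply: cvgB; [exact: cvg_fst | exact: cvg_snd].
- apply: (cvg_comp (fun z : 'rV[R]_n * 'rV[R]_n => z.1) (fun y => enorm (y - p1))).
    exact: cvg_fst.
  exact: enormB_continuous.
- apply: (cvg_comp (fun z : 'rV[R]_n * 'rV[R]_n => z.2) (fun y => enorm (y - p2))).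
    exact: cvg_snd.
  exact: enormB_continuous.
Qed.

End PenalizedGap.

Definition penalized_argmin (R : realType) (n : nat) (K1 K2 : set 'rV[R]_n)
    (p1 p2 : 'rV[R]_n) (eps : R) (y1 y2 : 'rV[R]_n) : Prop :=
  [/\ K1 y1, K2 y2 & forall z1 z2, K1 z1 -> K2 z2 ->
    penalized_gap p1 p2 eps (y1, y2) <= penalized_gap p1 p2 eps (z1, z2)].

Section PenalizedArgmin.
Variables (R : realType) (n : nat) (K1 K2 : set 'rV[R]_n) (p1 p2 : 'rV[R]_n) (eps : R).

Lemma penalized_argminC (y1 y2 : 'rV[R]_n) :
  penalized_argmin K1 K2 p1 p2 eps y1 y2 -> penalized_argmin K2 K1 p2 p1 eps y2 y1.
Proof.
case=> Ky1 Ky2 y_min; split => // z2 z1 Kz2 Kz1.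
rewrite /penalized_gap /= (enorm_distC y2) (enorm_distC z2).
by rewrite (addrC (enorm (y2 - p2))) (addrC (enorm (z2 - p2))); exact: y_min.
Qed.

Lemma penalized_argmin_left (y1 y2 : 'rV[R]_n) : penalized_argmin K1 K2 p1 p2 eps y1 y2 ->
  forall z, K1 z ->
  enorm (y1 - y2) + eps * enorm (y1 - p1) <= enorm (z - y2) + eps * enorm (z - p1).
Proof.
case=> _ Ky2 y_min z Kz; have := y_min _ _ Kz Ky2.
by rewrite /penalized_gap /= !mulrDr !addrA lerD2r.
Qed.

Lemma penalized_argmin_le (y1 y2 : 'rV[R]_n) : K1 p1 -> K2 p2 ->
  penalized_argmin K1 K2 p1 p2 eps y1 y2 ->
  enorm (y1 - y2) + eps * (enorm (y1 - p1) + enorm (y2 - p2)) <= enorm (p1 - p2).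
Proof.
move=> Kp1 Kp2 [_ _ y_min]; have := y_min _ _ Kp1 Kp2.
by rewrite /penalized_gap /= !subrr enorm0 addr0 mulr0 addr0.
Qed.

Lemma penalized_argmin_bd (y1 y2 : 'rV[R]_n) : 0 <= eps -> eps < 1 -> y1 != y2 ->
  penalized_argmin K1 K2 p1 p2 eps y1 y2 -> bd K1 y1 /\ ~ K2 y1.
Proof.
move=> eps_ge0 eps_lt1 y12 argmin; have [Ky1 _ y_min] := argmin.
split.
  split; first exact: subset_closure.
  exact: penalized_min_not_interior eps_ge0 (penalized_argmin_left argmin) eps_lt1 y12.
move=> K2y1; have := y_min _ _ Ky1 K2y1; rewrite /penalized_gap /= subrr enorm0 add0r.
have := enormD (y1 - y2) (y2 - p2); rewrite addrA subrK.
have : 0 < enorm (y1 - y2) by rewrite enorm_gt0 subr_eq0.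
set d := enorm (y1 - y2); set Y := enorm (y2 - p2); set Z := enorm (y1 - p2).
move=> d_gt0 le_Z; have := ler_wpM2l eps_ge0 le_Z; nra.
Qed.

(* Minimizing over [K1 x K2] reduces to a compact set: pairs far from [(p1, p2)]
   already have a larger gap than [(p1, p2)] itself. *)
Lemma penalized_argmin_exists : closed K1 -> closed K2 -> K1 p1 -> K2 p2 -> 0 < eps ->
  exists y1 y2, penalized_argmin K1 K2 p1 p2 eps y1 y2.
Proof.
move=> K1cl K2cl Kp1 Kp2 eps_gt0.
set r := enorm (p1 - p2) / eps + 1.
have r_ge0 : 0 <= r by rewrite addr_ge0 // divr_ge0 ?enorm_ge0 // ltW.
have eps_r : eps * r = enorm (p1 - p2) + eps.
  by rewrite /r mulrDr mulr1 mulrCA divff ?mulr1 // gt_eqF.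
pose C := (K1 `&` [set y | enorm (y - p1) <= r]) `*` (K2 `&` [set y | enorm (y - p2) <= r]).
have pC : C (p1, p2) by split; split => //=; rewrite subrr enorm0.
have C_compact : compact C := compact_setX
  (compact_closed_enorm_ball (p:=p1) (r:=r) K1cl) (compact_closed_enorm_ball (p:=p2) (r:=r) K2cl).
have [[y1 y2] yC y_min] := compact_EVT_min (ex_intro _ _ pC) C_compact
  (continuous_subspaceT (penalized_gap_continuous (p1:=p1) (p2:=p2) (eps:=eps))).
rewrite inE in yC; case: yC => -[/= Ky1 _] [/= Ky2 _].
have le_p : penalized_gap p1 p2 eps (y1, y2) <= enorm (p1 - p2).
  have := y_min (p1, p2); rewrite inE /penalized_gap /= !subrr enorm0 addr0 mulr0 addr0.
  exact.
exists y1, y2; split => // z1 z2 Kz1 Kz2; rewrite /penalized_gap /= in le_p *.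
have := enorm_ge0 (z1 - z2); have := enorm_ge0 (z1 - p1); have := enorm_ge0 (z2 - p2).
have [z1r|] := lerP (enorm (z1 - p1)) r; last nra.
have [z2r|] := lerP (enorm (z2 - p2)) r; last nra.
by move=> *; apply: (y_min (z1, z2)); rewrite inE.
Qed.

End PenalizedArgmin.

Lemma approx_dotp_ge (R : realType) (n : nat) (D u : 'rV[R]_n) (alpha : R) :
  enorm (D - u) <= alpha * enorm D -> (1 - alpha) * enorm D ^+ 2 <= dotp u D.
Proof.
move=> Du; have := cauchy_schwarz (D - u) D.
rewrite dotpBl -enorm_sqr; have := ler_wpM2r (enorm_ge0 D) Du; nra.
Qed.

Definition metric_subtransversal (R : realType) (n : nat) (K1 K2 : set 'rV[R]_n)
    (xo : 'rV[R]_n) (delta L : R) : Prop :=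
  forall p1 p2, K1 p1 -> K2 p2 -> enorm (p1 - xo) < delta -> enorm (p2 - xo) < delta ->
  exists2 z, (K1 `&` K2) z & enorm (z - p1) <= L * enorm (p1 - p2).

Section Transversality.
Variables (R : realType) (n : nat) (K1 K2 N : set 'rV[R]_n) (c alpha : R).

Definition tangent_transversal : Prop :=
  forall x1 x2 : 'rV[R]_n,
    bd K1 x1 -> ~ K2 x1 -> N x1 -> bd K2 x2 -> ~ K1 x2 -> N x2 ->
    exists v1 v2 : 'rV[R]_n,
      contingent_cone K1 x1 v1 /\ contingent_cone K2 x2 v2 /\
      enorm2 v1 v2 <= c * enorm (x1 - x2) /\
      enorm ((x2 - x1) - (v1 - v2)) <= alpha * enorm (x1 - x2).

Hypothesis transversal : tangent_transversal.

(* At distinct minimizers the first-order conditions give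
   [<y2 - y1, v1 - v2> <= 2 eps c |y1 - y2|^2], while transversality gives
   [<y2 - y1, v1 - v2> >= (1 - alpha) |y1 - y2|^2]. *)
Lemma penalized_argmin_eq (p1 p2 y1 y2 : 'rV[R]_n) (eps : R) :
  0 <= eps -> eps < 1 -> 2 * eps * c < 1 - alpha ->
  penalized_argmin K1 K2 p1 p2 eps y1 y2 -> N y1 -> N y2 -> y1 = y2.
Proof.
move=> eps_ge0 eps_lt1 eps_small argmin Ny1 Ny2; apply/eqP/negPn/negP => y12.
have argmin' := penalized_argminC argmin.
have [bd1 K2y1] := penalized_argmin_bd eps_ge0 eps_lt1 y12 argmin.
have y21 : y2 != y1 by rewrite eq_sym.
have [bd2 K1y2] := penalized_argmin_bd eps_ge0 eps_lt1 y21 argmin'.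
have [v1 [v2 [Tv1 [Tv2 [small_v near_v]]]]] := transversal bd1 K2y1 Ny1 bd2 K1y2 Ny2.
have := penalized_min_tangent eps_ge0 (penalized_argmin_left argmin) Tv1.
have := penalized_min_tangent eps_ge0 (penalized_argmin_left argmin') Tv2.
rewrite (enorm_distC y1 y2) in near_v; have := approx_dotp_ge near_v.
rewrite dotpBl -[y1 - y2]opprB dotpNl enormN !(dotpC (y2 - y1)).
have := le_trans (enorm_le_enorm2l v1 v2) small_v.
have := le_trans (enorm_le_enorm2r v1 v2) small_v.
rewrite (enorm_distC y1 y2); have : 0 < enorm (y2 - y1) by rewrite enorm_gt0 subr_eq0.
set d := enorm (y2 - y1) => d_gt0 v2_le v1_le lb f2 f1.
have := ler_wpM2l (mulr_ge0 eps_ge0 (ltW d_gt0)) v1_le.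
have := ler_wpM2l (mulr_ge0 eps_ge0 (ltW d_gt0)) v2_le.
have : 0 < d * d * (1 - alpha - 2 * eps * c) by rewrite !mulr_gt0 // subr_gt0.
nra.
Qed.

Lemma tangent_transversal_subtransversal (xo : 'rV[R]_n) :
  closed K1 -> closed K2 -> nbhs xo N -> 0 < c -> alpha < 1 ->
  exists2 delta, 0 < delta & exists L, metric_subtransversal K1 K2 xo delta L.
Proof.
move=> K1cl K2cl /nbhs_enorm_ball [r r_gt0 rN] c_gt0 alpha_lt1.
pose eps := Num.min (1 / 2) ((1 - alpha) / (4 * c)).
have eps_gt0 : 0 < eps by rewrite lt_min divr_gt0 //= divr_gt0 ?mulr_gt0 // subr_gt0.
have eps_le_half : eps <= 1 / 2 by rewrite ge_min lexx.
have eps_small : 2 * eps * c < 1 - alpha.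
  have : eps * (4 * c) <= 1 - alpha by rewrite -ler_pdivlMr ?mulr_gt0 // ge_min lexx orbT.
  have : 0 < 1 - alpha by rewrite subr_gt0.
  nra.
(* With [delta = r eps / 4] the minimizers lie within [|p1 - p2| / eps < r / 2]
   of [p1] and [p2], hence in [N]. *)
exists (r * eps / 4); first by rewrite !divr_gt0 ?mulr_gt0.
exists eps^-1 => p1 p2 Kp1 Kp2 p1x p2x.
have [y1 [y2 argmin]] := penalized_argmin_exists K1cl K2cl Kp1 Kp2 eps_gt0.
have := penalized_argmin_le Kp1 Kp2 argmin.
have := enormD (p1 - xo) (xo - p2); rewrite addrA subrK (enorm_distC xo p2).
have := enorm_ge0 (y1 - y2); have := enorm_ge0 (y1 - p1); have := enorm_ge0 (y2 - p2).
set d := enorm (p1 - p2) => y2p2 y1p1 y1y2 d_le y_le.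
have d_lt : d < r * eps / 2 by lra.
have near_xo (y p : 'rV[R]_n) : enorm (p - xo) < r * eps / 4 -> eps * enorm (y - p) <= d -> N y.
  move=> px yp; apply: rN; have := enormD (y - p) (p - xo); rewrite addrA subrK.
  have : enorm (y - p) < r / 2.
    rewrite -(ltr_pM2l eps_gt0); apply: le_lt_trans yp _.
    by have -> : eps * (r / 2) = r * eps / 2 by ring.
  have : r * eps / 4 <= r / 8 by have := ler_wpM2l (ltW r_gt0) eps_le_half; lra.
  lra.
have y12 : y1 = y2.
  apply: (penalized_argmin_eq _ _ eps_small argmin); first exact: ltW; first lra.
  - by apply: (near_xo _ _ p1x); nra.
  - by apply: (near_xo _ _ p2x); nra.
have [Ky1 Ky2 _] := argmin.
exists y1; first by split; last rewrite y12.
by rewrite ler_pdivlMl // -[X in _ <= X]mul1r; nra.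
Qed.

End Transversality.

Section ConeSequences.
Variables (R : realType) (n : nat).

Lemma enorm_cvg0 (u : nat -> 'rV[R]_n) (g : nat -> R) :
  g @ \oo --> 0 -> (\forall k \near \oo, enorm (u k) <= g k) -> u @ \oo --> (0 : 'rV[R]_n).
Proof.
move=> g0 ug; apply: norm_cvg0; apply: (squeeze_cvgr _ (cvg_cst 0) g0).
by apply: filterS ug => k ug; rewrite normr_ge0 (le_trans (normr_le_enorm _)).
Qed.

Lemma scaled_enorm_near (t : nat -> R) (w : nat -> 'rV[R]_n) (v : 'rV[R]_n) (delta : R) :
  0 < delta -> t @ \oo --> 0 -> w @ \oo --> v ->
  \forall k \near \oo, enorm (t k *: w k) < delta.
Proof.
move=> delta_gt0 t0 wv; apply: (cvgr_lt 0) => //.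
rewrite -(enorm0 R n) -(scale0r v).
exact: cvg_comp _ _ (cvgZ t0 wv) (@enorm_continuous _ _ _).
Qed.

(* Sequences approaching [xo] from [K1] and [K2] along the same direction [v]
   are projected onto [K1 `&` K2] at a cost [L |t_k (w1_k - w2_k)| = o(t_k)]. *)
Lemma subtransversal_cone_seq (K1 K2 : set 'rV[R]_n) (xo : 'rV[R]_n) (delta L : R)
    (t : nat -> R) (w1 w2 : nat -> 'rV[R]_n) (v : 'rV[R]_n) :
  0 < delta -> metric_subtransversal K1 K2 xo delta L -> K1 xo -> K2 xo ->
  (forall k, 0 < t k) -> t @ \oo --> 0 -> w1 @ \oo --> v -> w2 @ \oo --> v ->
  (forall k, K1 (xo + t k *: w1 k)) -> (forall k, K2 (xo + t k *: w2 k)) ->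
  exists u : nat -> 'rV[R]_n, u @ \oo --> v /\ forall k, (K1 `&` K2) (xo + t k *: u k).
Proof.
move=> delta_gt0 sub K1xo K2xo t_gt0 t0 w1v w2v Kw1 Kw2.
have [N _ wN] := filterS2 _ (fun k (a b : _) => conj a b)
  (scaled_enorm_near delta_gt0 t0 w1v) (scaled_enorm_near delta_gt0 t0 w2v).
have z_ex k : exists zk : 'rV[R]_n, (K1 `&` K2) zk /\
    ((N <= k)%N -> enorm (zk - (xo + t k *: w1 k)) <= L * (t k * enorm (w1 k - w2 k))).
  have [Nk|] := leqP N k; last first.
    by exists xo; split => //; rewrite leqNgt => ->.
  have [w1_near w2_near] := wN k Nk.
  have near1 : enorm (xo + t k *: w1 k - xo) < delta by rewrite addrAC subrr add0r.
  have near2 : enorm (xo + t k *: w2 k - xo) < delta by rewrite addrAC subrr add0r.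
  have [zk Kz zk_le] := sub _ _ (Kw1 k) (Kw2 k) near1 near2.
  exists zk; split => // _; move: zk_le.
  have -> : xo + t k *: w1 k - (xo + t k *: w2 k) = t k *: (w1 k - w2 k).
    by rewrite opprD addrACA subrr add0r scalerBr.
  by rewrite enormZ gtr0_norm.
have [z zP] := choice z_ex.
exists (fun k => (t k)^-1 *: (z k - xo)); split; last first.
  by move=> k; rewrite scalerA mulfV ?gt_eqF // scale1r addrC subrK; exact: (zP k).1.
have u_w1 : (fun k => (t k)^-1 *: (z k - xo) - w1 k) @ \oo --> (0 : 'rV[R]_n).
  apply: (@enorm_cvg0 _ (fun k => L * enorm (w1 k - w2 k))).
    rewrite -(mulr0 L) -(enorm0 R n) -(subrr v).
    exact: cvgMl_tmp (cvg_comp _ _ (cvgB w1v w2v) (@enorm_continuous _ _ _)).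
  exists N => // k /= Nk.
  have -> : (t k)^-1 *: (z k - xo) - w1 k = (t k)^-1 *: (z k - (xo + t k *: w1 k)).
    by rewrite !scalerBr scalerDr scalerA mulVf ?gt_eqF // scale1r opprD addrA.
  rewrite enormZ gtr0_norm ?invr_gt0 // ler_pdivrMl // mulrCA.
  exact: (zP k).2.
rewrite -[v]add0r; apply: cvg_trans (cvgD u_w1 w1v).
by apply: near_eq_cvg; apply: nearW => k /=; rewrite subrK.
Qed.

End ConeSequences.

Theorem lemma1 (R : realType) (n : nat) (K1 K2 : set 'rV[R]_n)
  (hK1 : closed K1) (hK2 : closed K2)
  (hreg : forall x, bd K1 x -> bd K2 x -> contingent_cone K1 x = adjacent_cone K1 x)
  (xo : 'rV[R]_n) (hxo1 : bd K1 xo) (hxo2 : bd K2 xo)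
  (N : set 'rV[R]_n) (hN : nbhs xo N) (c alpha : R)
  (hc : 0 < c) (ha0 : 0 <= alpha) (ha1 : alpha < 1)
  (hmain : forall x1 x2 : 'rV[R]_n,
      bd K1 x1 -> ~ K2 x1 -> N x1 ->
      bd K2 x2 -> ~ K1 x2 -> N x2 ->
      exists v1 v2 : 'rV[R]_n,
        contingent_cone K1 x1 v1 /\ contingent_cone K2 x2 v2 /\
        enorm2 v1 v2 <= c * enorm (x1 - x2) /\
        enorm ((x2 - x1) - (v1 - v2)) <= alpha * enorm (x1 - x2)) :
  contingent_cone K1 xo `&` contingent_cone K2 xo = contingent_cone (K1 `&` K2) xo /\
  adjacent_cone K1 xo `&` adjacent_cone K2 xo = adjacent_cone (K1 `&` K2) xo.
Proof.
have K1xo : K1 xo by rewrite (closure_id K1).1 //; case: hxo1.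
have K2xo : K2 xo by rewrite (closure_id K2).1 //; case: hxo2.
have [delta delta_gt0 [L sub]] := tangent_transversal_subtransversal hmain hK1 hK2 hN hc ha1.
have cone_seq := subtransversal_cone_seq delta_gt0 sub K1xo K2xo.
split; apply/seteqP; split.
- move=> v [+ [t [w2 [t_gt0 [t0 [w2v Kw2]]]]]].
  rewrite (hreg xo hxo1 hxo2) => /(_ t t_gt0 t0) [w1 [w1v Kw1]].
  have [u [uv Ku]] := cone_seq _ _ _ _ t_gt0 t0 w1v w2v Kw1 Kw2.
  by exists t, u.
- by move=> v Tv; split; apply: contingent_cone_sub Tv => ? [].
- move=> v [T1 T2] t t_gt0 t0.
  have [w1 [w1v Kw1]] := T1 t t_gt0 t0; have [w2 [w2v Kw2]] := T2 t t_gt0 t0.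
  have [u [uv Ku]] := cone_seq _ _ _ _ t_gt0 t0 w1v w2v Kw1 Kw2.
  by exists u.
- by move=> v Tv; split; apply: adjacent_cone_sub Tv => ? [].
Qed.
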